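(* The set $\mathbb{N}$ is not a minimal additive complement to any set $W \subseteq \mathbb{Z}$.
   Context: $\mathbb{N}$ denotes the set of nonnegative integers. For $X, Y \subseteq \mathbb{Z}$, $X + Y = \{x + y : x \in X, y \in Y\}$. A set $C \subseteq \mathbb{Z}$ is an additive complement to $W \subseteq \mathbb{Z}$ if $C + W = \mathbb{Z}$; it is a minimal additive complement to $W$ if moreover no proper subset of $C$ is an additive complement to $W$. *)

From Stdlib Require Import ZArith.
Open Scope Z_scope.

Definition additive_complement (C W : Z -> Prop) : Prop :=
  forall n : Z, exists c w : Z, C c /\ W w /\ n = c + w.

Definition minimal_additive_complement (C W : Z -> Prop) : Prop :=
  additive_complement C W /\
  forall C' : Z -> Prop,
    (forall x, C' x -> C x) ->
    (exists x, C x /\ ~ C' x) ->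
    ~ additive_complement C' W.

Definition natZ : Z -> Prop := fun x => 0 <= x.

From Stdlib Require Import ZArith Lia.

Definition translate (k : Z) (C : Z -> Prop) : Z -> Prop := fun x => C (x - k).

Lemma additive_complement_translate (k : Z) (C W : Z -> Prop) :
  additive_complement C W -> additive_complement (translate k C) W.
Proof.
  intros HCW n.
  destruct (HCW (n - k)) as (c & w & Hc & Hw & Hn).
  exists (c + k), w; unfold translate.
  repeat split; [replace (c + k - k) with c by lia | | lia]; assumption.
Qed.

Lemma translate_natZ_sub (k : Z) (x : Z) :
  0 <= k -> translate k natZ x -> natZ x.
Proof. unfold translate, natZ; lia. Qed.

Theorem proposition2 : forall W : Z -> Prop, ~ minimal_additive_complement natZ W.
Proof.
  intros W [HNW Hmin].
  apply (Hmin (translate 1 natZ)).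
  - intros x; apply translate_natZ_sub; lia.
  - exists 0; unfold translate, natZ; split; lia.
  - apply additive_complement_translate; exact HNW.
Qed.
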